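(* Consider the power-market model described in the context, fix a day $k$, a parameter $\eta>0$ and the queue state $\mathbf{Q}(t_k)$. For a price vector $\mathbf{p}(k)=(p(k,t))_{t=0}^{T-1}\in\mathcal{P}$ define $$\Phi(\mathbf{p}(k))=\sum_{t=0}^{T-1}\mathbb{E}\Big[\eta\sum_{n=1}^N U_n(L_n(k,t),t)-\eta\,\text{Cost}(k,t)+\sum_n Q_n(t_k+t)\,L^{\mathsf{d}}_n(p(k,t),t)\,\Big|\,\mathbf{Q}(t_k)\Big],$$ $$\Phi^{\mathsf{A}}(\mathbf{p}(k))=\sum_{t=0}^{T-1}\mathbb{E}\Big[\eta\sum_{n=1}^N U_n(L_n(k,t),t)-\eta\,\text{Cost}(k,t)+\sum_n Q_n(t_k)\,L^{\mathsf{d}}_n(p(k,t),t)\,\Big|\,\mathbf{Q}(t_k)\Big],$$ where the loads are those induced by the prices. Let $\Phi^*$ be the maximum of $\Phi$ over $\mathcal{P}$ and let $\mathbf{p}^{\mathsf{A}}(k)$ be a maximizer of $\Phi^{\mathsf{A}}$ over $\mathcal{P}$. Then $$\Phi^{\mathsf{A}}(\mathbf{p}^{\mathsf{A}}(k))\ge \Phi^*-TC_0,\qquad C_0=\frac{T-1}{2}\sum_n\big([L_n^{\max}]^2+[L_n^{\mathsf{av}}]^2\big).$$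
   Context: Days $k=0,1,\dots$ are divided into $T$ slots, $t_k=kT$. The utility company chooses user prices $\mathbf{p}(k)=(p(k,t))_t$ from a compact set $\mathcal{P}\subseteq[0,p_{\max}]^T$. Each of $N$ users has an increasing continuous utility $U_n(L,t)$; given price $p(k,t)$, user $n$ chooses the intended load $L^{\mathsf{d}}_n(p(k,t),t)$ as the smallest maximizer over $L\in[L_n^{\min}(t),L_n^{\mathsf{d},\max}]$ of $\mathbb{E}[U_n(L+w_n(k,t),t)-p(k,t)(L+w_n(k,t))]$, and actually consumes $L_n(k,t)=L^{\mathsf{d}}_n(k,t)+w_n(k,t)$ with $w_n$ zero-mean random deviations, where $0\le L_n(k,t)\le L_n^{\max}$. $\text{Cost}(k,t)=\beta(k,t)B(k,t)+\alpha(k,t)[L(k,t)-B(k,t)-X(k,t)]^+$ is the power procurement cost ($X$ renewable power, $B$ base-power bought at day-ahead price $\beta$, deficit bought at real-time price $\alpha$, $L=\sum_n L_n$). Deficit queues: $Q_n(0)=0$, $Q_n(t_k+t+1)=[Q_n(t_k+t)-L_n(k,t)]^++L_n^{\mathsf{av}}$, with constants $L_n^{\mathsf{av}}\ge0$; $\mathbf{Q}=(Q_n)_n$. *)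

From HB Require Import structures.
From mathcomp Require Import all_boot all_order all_algebra.
From mathcomp Require Import all_classical all_reals all_analysis.
Set Implicit Arguments. Unset Strict Implicit. Unset Printing Implicit Defensive.
Import Order.TTheory GRing.Theory Num.Theory.
Import numFieldNormedType.Exports.
Local Open Scope classical_set_scope.
Local Open Scope ring_scope.

Definition pospart {R : realType} (x : R) : R := Num.max x 0.

Definition slot_ext {R : realType} {T : nat} (f : 'I_T -> R) (s : nat) : R :=
  if (insub s : option 'I_T) is Some i then f i else 0.

(* deficit queue within the day: Q(t_k) = q, Q(t_k+s+1) = [Q(t_k+s) - l s]^+ + Lav *)
Fixpoint queue {R : realType} (q Lav : R) (l : nat -> R) (t : nat) : R :=
  match t with
  | 0 => q
  | t'.+1 => pospart (queue q Lav l t' - l t') + Lav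
  end.

Definition smallest_maximizer {R : realType} (f : R -> \bar R) (a b x : R) : Prop :=
  [/\ a <= x <= b,
      (forall y, a <= y <= b -> (f y <= f x)%E) &
      (forall y, a <= y <= b -> f y = f x -> x <= y)].

Section Model.
Context {R : realType} {d : measure_display} {Om : measurableType d}.
Context (P : probability Om R) (N T : nat).
(* U n L t : utility of user n for load L at slot t *)
Context (U : 'I_N -> R -> 'I_T -> R).
(* Ld n price t : intended load of user n at slot t for the given price *)
Context (Ld : 'I_N -> R -> 'I_T -> R).
(* w n t : random deviation of user n at slot t (of day k) *)
Context (w : 'I_N -> 'I_T -> Om -> R).
(* renewable X, base power B, day-ahead price beta, real-time price alpha *)
Context (X B beta alpha : 'I_T -> Om -> R).

Definition user_obj (n : 'I_N) (t : 'I_T) (price L : R) : \bar R :=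
  (\int[P]_om (U n (L + w n t om) t - price * (L + w n t om))%:E)%E.

(* actual load L_n(k,t) induced by price vector p *)
Definition load (p : 'rV[R]_T) (n : 'I_N) (t : 'I_T) (om : Om) : R :=
  Ld n (p ord0 t) t + w n t om.

Definition total_load (p : 'rV[R]_T) (t : 'I_T) (om : Om) : R :=
  \sum_(n < N) load p n t om.

Definition cost (p : 'rV[R]_T) (t : 'I_T) (om : Om) : R :=
  beta t om * B t om + alpha t om * pospart (total_load p t om - B t om - X t om).

(* Q_n(t_k + t) under price vector p, given Q(t_k) = q0 *)
Definition queue_at (q0 Lav : 'I_N -> R) (p : 'rV[R]_T) (n : 'I_N) (t : nat)
  (om : Om) : R :=
  queue (q0 n) (Lav n) (slot_ext (fun s => load p n s om)) t.

Definition Phi (eta : R) (q0 Lav : 'I_N -> R) (p : 'rV[R]_T) : \bar R :=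
  (\sum_(t < T) \int[P]_om
     (eta * (\sum_(n < N) U n (load p n t om) t) - eta * cost p t om
      + \sum_(n < N) queue_at q0 Lav p n t om * Ld n (p ord0 t) t)%:E)%E.

Definition PhiA (eta : R) (q0 : 'I_N -> R) (p : 'rV[R]_T) : \bar R :=
  (\sum_(t < T) \int[P]_om
     (eta * (\sum_(n < N) U n (load p n t om) t) - eta * cost p t om
      + \sum_(n < N) q0 n * Ld n (p ord0 t) t)%:E)%E.

End Model.

From HB Require Import structures.
From mathcomp Require Import all_boot all_order all_algebra.
From mathcomp Require Import all_classical all_reals all_analysis.
From mathcomp Require Import lra.
Set Implicit Arguments.
Unset Strict Implicit.
Unset Printing Implicit Defensive.
Import Order.TTheory GRing.Theory Num.Theory.
Import numFieldNormedType.Exports.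
Local Open Scope classical_set_scope.
Local Open Scope ring_scope.

(** The queue of user [n] starts the day at [Q_n(t_k)] and grows by at most
    [L_n^av] per slot, so at slot [t <= T - 1] the gap [Q_n(t_k + t) - Q_n(t_k)] is
    at most [(T - 1) L_n^av].  Multiplying by the intended load, which lies in
    [[0, L_n^max]] because it is the mean of the actual load, and using
    [2 a b <= a^2 + b^2] bounds the gap term of [Phi] by [C_0] pointwise; summing
    over the [T] slots gives [Phi <= Phi^A + T C_0] at every price vector.
    Hence [Phi^* = Phi(p^* ) <= Phi^A(p^* ) + T C_0 <= Phi^A(p^A) + T C_0]. *)

Section ProbabilityBounds.
Variables (R : realType) (d : measure_display) (Om : measurableType d).
Variable P : probability Om R.
Local Open Scope ereal_scope.

Lemma integral_prob_cst (c : R) : \int[P]_om c%:E = c%:E.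
Proof. by rewrite (integral_cst P measurableT c%:E) /= probability_setT mule1. Qed.

Lemma integral_le_cst (f : Om -> R) (c : R) :
  P.-integrable setT (fun om => (f om)%:E) -> (forall om, (f om <= c)%R) ->
  \int[P]_om (f om)%:E <= c%:E.
Proof.
move=> intf fc; rewrite -integral_prob_cst.
apply: le_integral => //; first exact: finite_measure_integrable_cst.
by move=> om _; rewrite lee_fin.
Qed.

Lemma integral_ge_cst (f : Om -> R) (c : R) :
  P.-integrable setT (fun om => (f om)%:E) -> (forall om, (c <= f om)%R) ->
  c%:E <= \int[P]_om (f om)%:E.
Proof.
move=> intf cf; rewrite -integral_prob_cst.
apply: le_integral => //; first exact: finite_measure_integrable_cst.
by move=> om _; rewrite lee_fin.
Qed.

Lemma integral_cst_add_centered (w : Om -> R) (c : R) :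
  P.-integrable setT (fun om => (w om)%:E) -> \int[P]_om (w om)%:E = 0 ->
  \int[P]_om (c + w om)%:E = c%:E.
Proof.
move=> intw w0; under eq_integral do rewrite EFinD.
rewrite integralD //; last exact: finite_measure_integrable_cst.
by rewrite integral_prob_cst w0 adde0.
Qed.

Lemma centered_shift_bounds (w : Om -> R) (a b c : R) :
  P.-integrable setT (fun om => (w om)%:E) -> \int[P]_om (w om)%:E = 0 ->
  (forall om, a <= c + w om <= b)%R -> (a <= c <= b)%R.
Proof.
move=> intw w0 hab.
have intcw : P.-integrable setT (fun om => (c + w om)%:E).
  apply: (eq_integrable measurableT _ _ _
    (integrableD measurableT (finite_measure_integrable_cst P c measurableT) intw)).
  by move=> om _.
rewrite -!lee_fin -(integral_cst_add_centered c intw w0).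
apply/andP; split.
- by apply: integral_ge_cst => // om; case/andP: (hab om).
- by apply: integral_le_cst => // om; case/andP: (hab om).
Qed.

Lemma integral_add_le_cst (f h : Om -> R) (c : R) :
  P.-integrable setT (fun om => (f om)%:E) ->
  P.-integrable setT (fun om => (h om)%:E) -> (forall om, (h om <= c)%R) ->
  \int[P]_om (f om + h om)%:E <= \int[P]_om (f om)%:E + c%:E.
Proof.
move=> intf inth hc; under eq_integral do rewrite EFinD.
by rewrite integralD //; apply: leeD2l; apply: integral_le_cst.
Qed.

End ProbabilityBounds.

Section Queue.
Variables (R : realType) (q Lav : R).
Hypotheses (q_ge0 : 0 <= q) (Lav_ge0 : 0 <= Lav).

Lemma queue_ge0 (l : nat -> R) t : 0 <= queue q Lav l t.
Proof. by case: t => [|t] //=; rewrite addr_ge0 // le_max lexx orbT. Qed.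

Lemma queue_le (l : nat -> R) t :
  (forall s, 0 <= l s) -> queue q Lav l t <= q + t%:R * Lav.
Proof.
move=> l_ge0; elim: t => [|t IH] /=; first by rewrite mul0r addr0.
rewrite -natr1 mulrDl mul1r addrA lerD2r; apply: le_trans IH.
by rewrite ge_max queue_ge0 andbT lerBlDr lerDl.
Qed.

Lemma measurable_queue (d : measure_display) (Om : measurableType d)
    (l : nat -> Om -> R) t :
  (forall s, measurable_fun setT (l s)) ->
  measurable_fun setT (fun om => queue q Lav (l^~ om) t).
Proof.
move=> ml; elim: t => [|t IH] /=; first exact: measurable_cst.
apply: measurable_realfun.measurable_funD => //.
apply: measurable_realfun.measurable_maxr => //.
exact: measurable_realfun.measurable_funB.
Qed.

End Queue.

Lemma drift_mul_le (R : realType) (D k a x M : R) :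
  0 <= k -> 0 <= a -> 0 <= x <= M -> D <= k * a ->
  D * x <= k / 2 * (M ^+ 2 + a ^+ 2).
Proof.
move=> k0 a0 /andP[x0 xM] Dka.
have Dx_le : D * x <= k * a * x by rewrite ler_wpM2r.
have kax_le : k * a * x <= k * a * M by rewrite ler_wpM2l // mulr_ge0.
have ksqr_ge0 : 0 <= k * (M - a) ^+ 2 by rewrite mulr_ge0 // sqr_ge0.
nra.
Qed.

Section PhiVersusPhiA.
Variables (R : realType) (d : measure_display) (Om : measurableType d).
Variables (P : probability Om R) (N T : nat).
Variables (U : 'I_N -> R -> 'I_T -> R) (Ld : 'I_N -> R -> 'I_T -> R).
Variables (w : 'I_N -> 'I_T -> Om -> R) (X B beta alpha : 'I_T -> Om -> R).
Variables (Lmax Lav q0 : 'I_N -> R) (eta : R) (p : 'rV[R]_T).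

Hypothesis w_measurable : forall n t, measurable_fun setT (w n t).
Hypothesis w_integrable : forall n t, P.-integrable setT (fun om => (w n t om)%:E).
Hypothesis w_centered : forall n t, (\int[P]_om (w n t om)%:E = 0)%E.
Hypothesis load_bounds : forall n t om, 0 <= load Ld w p n t om <= Lmax n.
Hypothesis U_integrable :
  forall n t, P.-integrable setT (fun om => (U n (load Ld w p n t om) t)%:E).
Hypothesis cost_integrable :
  forall t, P.-integrable setT (fun om => (cost Ld w X B beta alpha p t om)%:E).
Hypothesis Lav_ge0 : forall n, 0 <= Lav n.
Hypothesis q0_ge0 : forall n, 0 <= q0 n.

Definition C0 : R := (T%:R - 1) / 2 * \sum_(n < N) (Lmax n ^+ 2 + Lav n ^+ 2).

Let x n (t : 'I_T) := Ld n (p ord0 t) t.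
Let Q n (t : 'I_T) om := queue_at Ld w q0 Lav p n t om.

Lemma intended_load_bounds n t : 0 <= x n t <= Lmax n.
Proof.
apply: (centered_shift_bounds (w_integrable n t) (w_centered n t)) => om.
exact: load_bounds.
Qed.

Lemma queue_at_bounds n (t : 'I_T) om : 0 <= Q n t om <= q0 n + t%:R * Lav n.
Proof.
rewrite queue_ge0 ?queue_le //= => s; rewrite /slot_ext.
by case: insub => [i|] //; case/andP: (load_bounds n i om).
Qed.

Lemma queue_gap_le_C0 t om : \sum_(n < N) (Q n t om - q0 n) * x n t <= C0.
Proof.
rewrite /C0 mulr_sumr; apply: ler_sum => n _.
have tT : (t%:R : R) <= T%:R - 1 by rewrite lerBrDr natr1 ler_nat.
apply: drift_mul_le; rewrite ?intended_load_bounds //.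
  exact: le_trans (ler0n _ t) tT.
have /andP[_ QtLav] := queue_at_bounds n t om.
by rewrite lerBlDl (le_trans QtLav) // lerD2l ler_wpM2r.
Qed.

Lemma measurable_queue_at n t : measurable_fun setT (Q n t).
Proof.
apply: measurable_queue => s; rewrite /slot_ext.
by case: insub => [i|]; [exact: measurable_realfun.measurable_funD | exact: measurable_cst].
Qed.

Lemma queue_gap_term_integrable n t :
  P.-integrable setT (fun om => ((Q n t om - q0 n) * x n t)%:E).
Proof.
apply: (le_integrable measurableT (g := fun=> ((q0 n + T%:R * Lav n) * Lmax n)%:E)).
- apply/measurable_realfun.measurable_EFinP.
  apply: measurable_realfun.measurable_funM => //.
  exact: measurable_realfun.measurable_funB (measurable_queue_at n t) _.
- move=> om _; rewrite !abse_EFin lee_fin normrM.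
  have /andP[x0 xM] := intended_load_bounds n t.
  have /andP[Q0 QtLav] := queue_at_bounds n t om.
  have tLav : t%:R * Lav n <= T%:R * Lav n by rewrite ler_wpM2r // ler_nat ltnW.
  have TLav0 : 0 <= T%:R * Lav n by rewrite mulr_ge0.
  have q0n := q0_ge0 n.
  rewrite (ger0_norm x0) [X in _ <= X]ger0_norm; last first.
    by rewrite mulr_ge0 ?addr_ge0 ?mulr_ge0 // (le_trans x0).
  by apply: ler_pM => //; rewrite ler_norml; apply/andP; split; lra.
- exact: finite_measure_integrable_cst.
Qed.

Lemma queue_gap_integrable t :
  P.-integrable setT (fun om => (\sum_(n < N) (Q n t om - q0 n) * x n t)%:E).
Proof.
apply: (eq_integrable measurableT _ _ _ (integrable_sum measurableT
  (index_enum 'I_N) (P := xpredT) (fun n _ => queue_gap_term_integrable n t))).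
by move=> om _; rewrite sumEFin.
Qed.

Lemma PhiA_integrand_integrable t :
  P.-integrable setT (fun om =>
    (eta * (\sum_(n < N) U n (load Ld w p n t om) t)
     - eta * cost Ld w X B beta alpha p t om + \sum_(n < N) q0 n * x n t)%:E).
Proof.
have intU := integrable_sum measurableT (index_enum 'I_N) (P := xpredT)
  (fun n _ => U_integrable n t).
have intUZ := integrableZl measurableT eta intU.
have intcZ := integrableZl measurableT eta (cost_integrable t).
apply: (eq_integrable measurableT _ _ _ (integrableD measurableT
  (integrableB measurableT intUZ intcZ)
  (finite_measure_integrable_cst P (\sum_(n < N) q0 n * x n t) measurableT))).
by move=> om _ /=; rewrite EFinD EFinB !EFinM sumEFin.
Qed.

Lemma Phi_slot_le_PhiA_slot t :
  (\int[P]_om (eta * (\sum_(n < N) U n (load Ld w p n t om) t)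
      - eta * cost Ld w X B beta alpha p t om + \sum_(n < N) Q n t om * x n t)%:E
   <= \int[P]_om (eta * (\sum_(n < N) U n (load Ld w p n t om) t)
      - eta * cost Ld w X B beta alpha p t om + \sum_(n < N) q0 n * x n t)%:E
      + C0%:E)%E.
Proof.
have split_queue om : \sum_(n < N) Q n t om * x n t =
    \sum_(n < N) q0 n * x n t + \sum_(n < N) (Q n t om - q0 n) * x n t.
  by rewrite -big_split; apply: eq_bigr => n _ /=; rewrite mulrBl addrC subrK.
under eq_integral do rewrite split_queue addrA.
exact: integral_add_le_cst (PhiA_integrand_integrable t) (queue_gap_integrable t)
  (queue_gap_le_C0 t).
Qed.

Lemma Phi_le_PhiA :
  (Phi P U Ld w X B beta alpha eta q0 Lav p
   <= PhiA P U Ld w X B beta alpha eta q0 p + (T%:R * C0)%:E)%E.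
Proof.
rewrite /Phi /PhiA; apply: (le_trans (lee_sum _ (fun t _ => Phi_slot_le_PhiA_slot t))).
by rewrite big_split /= sumEFin sumr_const card_ord mulr_natl.
Qed.

End PhiVersusPhiA.

Theorem lemma4 (R : realType) (d : measure_display) (Om : measurableType d)
  (P : probability Om R) (N T : nat)
  (U : 'I_N -> R -> 'I_T -> R) (Ld : 'I_N -> R -> 'I_T -> R)
  (w : 'I_N -> 'I_T -> Om -> R) (X B beta alpha : 'I_T -> Om -> R)
  (pmax : R) (Pset : set 'rV[R]_T)
  (Lmin : 'I_N -> 'I_T -> R) (Ldmax Lmax Lav q0 : 'I_N -> R) (eta : R)
  (pA pstar : 'rV[R]_T) :
  compact Pset ->
  (forall p, Pset p -> forall t, 0 <= p ord0 t <= pmax) ->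
  (forall n t, continuous (fun L => U n L t)) ->
  (forall n t, {homo (fun L => U n L t) : x y / x <= y}) ->
  (forall n t, measurable_fun setT (w n t)) ->
  (forall n t, P.-integrable setT (fun om => (w n t om)%:E)) ->
  (forall n t, (\int[P]_om (w n t om)%:E = 0)%E) ->
  (forall t, measurable_fun setT (X t)) ->
  (forall t, measurable_fun setT (B t)) ->
  (forall t, measurable_fun setT (beta t)) ->
  (forall t, measurable_fun setT (alpha t)) ->
  (forall p, Pset p -> forall n t,
     smallest_maximizer (user_obj P U w n t (p ord0 t)) (Lmin n t) (Ldmax n) (Ld n (p ord0 t) t)) ->
  (forall p, Pset p -> forall n t om, 0 <= load Ld w p n t om <= Lmax n) ->
  (forall p, Pset p -> forall n t,
     P.-integrable setT (fun om => (U n (load Ld w p n t om) t)%:E)) ->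
  (forall p, Pset p -> forall t,
     P.-integrable setT (fun om => (cost Ld w X B beta alpha p t om)%:E)) ->
  (forall n, 0 <= Lav n) ->
  (forall n, 0 <= q0 n) ->
  0 < eta ->
  Pset pstar ->
  (forall p, Pset p -> (Phi P U Ld w X B beta alpha eta q0 Lav p
                        <= Phi P U Ld w X B beta alpha eta q0 Lav pstar)%E) ->
  Pset pA ->
  (forall p, Pset p -> (PhiA P U Ld w X B beta alpha eta q0 p
                        <= PhiA P U Ld w X B beta alpha eta q0 pA)%E) ->
  (PhiA P U Ld w X B beta alpha eta q0 pA >=
     Phi P U Ld w X B beta alpha eta q0 Lav pstar
     - (T%:R * ((T%:R - 1) / 2 * \sum_(n < N) (Lmax n ^+ 2 + Lav n ^+ 2)))%:E)%E.
Proof.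
move=> _ _ _ _ w_meas w_int w_cent _ _ _ _ _ load_bnd U_int cost_int Lav_ge0 q0_ge0 _
  Pstar _ _ PhiA_max.
have Phi_star_le := Phi_le_PhiA eta w_meas w_int w_cent (load_bnd _ Pstar)
  (U_int _ Pstar) (cost_int _ Pstar) Lav_ge0 q0_ge0.
rewrite leeBlDr //; apply: le_trans Phi_star_le _.
by rewrite leeD2r // PhiA_max.
Qed.
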